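(* The VCG-nearest payment rule is not non-decreasing: there exists a combinatorial auction instance (goods, bidders, bundles of interest), an allocation $x$, a bidder $i$, and bid profiles $b,b'$ with $x$ efficient for both, $b_{-i}=b'_{-i}$, $b_i'\ge b_i$ coordinatewise, such that $p_i(b',x)<p_i(b,x)$ under VCG-nearest.
   Context: A combinatorial auction sells goods $M$ to bidders $N=\{1,\dots,n\}$. Each bidder $i$ bids $b_i(K)\ge0$ on each of his bundles of interest (bids on other bundles are $0$). An allocation $x$ gives each bidder $i$ one bundle $x_i$ (a bundle of interest or $\emptyset$), pairwise disjoint; $x$ is efficient for $b$ if it maximizes $W(b,x)=\sum_{i} b_i(x_i)$. For $L\subseteq N$ let $W_L(b_L,x)=\sum_{j\in L}b_j(x_j)$ and $X_L(b_L)$ an allocation maximizing $W_L(b_L,\cdot)$ (allocating goods only among bidders in $L$); write $W_{-i}$, $X_{-i}$ for $L=N\setminus\{i\}$. The VCG payment is $q_i(b,x)=W_{-i}(b_{-i},X_{-i}(b_{-i}))-W_{-i}(b_{-i},x)$. The core is the set of payment vectors $p$ with $\sum_{i\in N\setminus L}p_i\ge W_L(b_L,X_L(b_L))-W_L(b_L,x)$ for all $L\subseteq N$; the minimum-revenue core is the set of core points minimizing $\sum_i p_i$. The VCG-nearest payment $p(b,x)$ is the unique point of the minimum-revenue core minimizing the Euclidean distance $\|p-q(b,x)\|_2$. A payment rule is non-decreasing if for every allocation $x$, every bidder $i$ and all bid profiles $b,b'$ for which $x$ is efficient, with $b_{-i}=b'_{-i}$ and $b_i'\ge b_i$ coordinatewise,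 one has $p_i(b',x)\ge p_i(b,x)$. *)

From HB Require Import structures.
From mathcomp Require Import all_boot all_order all_algebra.
From mathcomp Require Import reals.
Set Implicit Arguments. Unset Strict Implicit. Unset Printing Implicit Defensive.
Import Order.TTheory GRing.Theory Num.Theory.
Local Open Scope ring_scope.

Section Auction.
Variables (R : realType) (m n : nat).
Notation good := 'I_m.
Notation bidder := 'I_n.

(* B i : the bundles of interest of bidder i;  b i K : bid of bidder i on K *)
Variable B : bidder -> {set {set good}}.

Definition bids_ok (b : bidder -> {set good} -> R) : Prop :=
  forall i K, 0 <= b i K /\ (K \notin B i -> b i K = 0).

Definition feasible (L : {set bidder}) (x : bidder -> {set good}) : bool :=
  [&& [forall i, (x i \in B i) || (x i == set0)],
      [forall i, forall j, (i != j) ==> [disjoint x i & x j]] &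
      [forall j, (j \notin L) ==> (x j == set0)]].

Definition W (L : {set bidder}) (b : bidder -> {set good} -> R)
  (x : bidder -> {set good}) : R := \sum_(j in L) b j (x j).

Definition Wopt (L : {set bidder}) (b : bidder -> {set good} -> R) : R :=
  \big[Num.max/0]_(y : {ffun bidder -> {set good}} | feasible L y) W L b y.

Definition efficient (b : bidder -> {set good} -> R) (x : bidder -> {set good}) : Prop :=
  feasible setT x /\
  forall y : bidder -> {set good}, feasible setT y -> W setT b y <= W setT b x.

Definition vcg (b : bidder -> {set good} -> R) (x : bidder -> {set good})
  (i : bidder) : R :=
  Wopt (setT :\ i) b - W (setT :\ i) b x.

Definition in_core (b : bidder -> {set good} -> R) (x : bidder -> {set good})
  (p : bidder -> R) : Prop :=
  forall L : {set bidder}, Wopt L b - W L b x <= \sum_(i in ~: L) p i.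

Definition in_mrc (b : bidder -> {set good} -> R) (x : bidder -> {set good})
  (p : bidder -> R) : Prop :=
  in_core b x p /\
  forall p' : bidder -> R, in_core b x p' -> \sum_i p i <= \sum_i p' i.

(* squared Euclidean distance (minimizing it = minimizing the distance) *)
Definition sqdist (p q : bidder -> R) : R := \sum_i (p i - q i) ^+ 2.

Definition vcg_nearest (b : bidder -> {set good} -> R) (x : bidder -> {set good})
  (p : bidder -> R) : Prop :=
  in_mrc b x p /\
  forall p' : bidder -> R, in_mrc b x p' -> sqdist p (vcg b x) <= sqdist p' (vcg b x).

End Auction.

(* The instance has two goods A and B and three bidders: bidder 1 bids 8 on
   {A} and h on {A,B}, bidder 2 bids 8 on {B}, bidder 3 bids 12 on {A,B}.
   For 0 <= h <= 16 it is efficient to give A to bidder 1 and B to bidder 2,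
   the VCG payments are (4, q, 0) with q = max(12, h) - 8, and the
   minimum-revenue core is a segment of the line p1 + p2 = 12, p3 = 0
   containing the projection (8 - q/2, 4 + q/2, 0) of the VCG point.  Raising
   h from 0 to 14 raises q from 4 to 6, so bidder 1's VCG-nearest payment
   drops from 6 to 5.  The VCG-nearest point is unique because the
   minimum-revenue core is convex and the squared distance strictly convex. *)

From mathcomp Require Import all_boot all_order all_algebra.
From mathcomp Require Import reals.
From mathcomp Require Import ring lra.
From Stdlib Require Import FunctionalExtensionality.
Set Implicit Arguments. Unset Strict Implicit. Unset Printing Implicit Defensive.
Import Order.TTheory GRing.Theory Num.Theory.
Local Open Scope ring_scope.

Section Allocations.
Variables (R : realType) (m n : nat) (B : 'I_n -> {set {set 'I_m}}).
Implicit Types (L : {set 'I_n}) (b : 'I_n -> {set 'I_m} -> R)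
  (y : 'I_n -> {set 'I_m}).

Definition restrict L y : 'I_n -> {set 'I_m} :=
  fun j => if j \in L then y j else set0.

Definition single (i : 'I_n) (K : {set 'I_m}) : 'I_n -> {set 'I_m} :=
  fun j => if j == i then K else set0.

Lemma feasible_bundle L y j : feasible B L y ->
  y j = set0 \/ (y j \in B j /\ j \in L).
Proof.
case/and3P => /forallP inB _ /forallP out.
case: (boolP (j \in L)) => jL; last by left; apply/eqP/(implyP (out j)).
by case/orP: (inB j) => [|/eqP]; [right|left].
Qed.

Lemma feasible_disjoint L y j k : feasible B L y -> j != k ->
  [disjoint y j & y k].
Proof. by case/and3P => _ /forallP disj _; apply/implyP/(forallP (disj j)). Qed.

Lemma feasible_restrict L y : feasible B setT y -> feasible B L (restrict L y).
Proof.
move=> Ty; have /and3P[/forallP inB _ _] := Ty; apply/and3P; split.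
- by apply/forallP => j; rewrite /restrict; case: ifP; rewrite ?eqxx ?orbT.
- apply/forallP => j; apply/forallP => k; apply/implyP => jk.
  have yjk := feasible_disjoint Ty jk; rewrite /restrict.
  by case: ifP => _; case: ifP => _; rewrite // -setI_eq0 ?set0I ?setI0.
- by apply/forallP => j; rewrite /restrict; case: ifP; rewrite ?eqxx.
Qed.

Lemma W_restrict L b y : W L b (restrict L y) = W L b y.
Proof. by apply: eq_bigr => j jL; rewrite /restrict jL. Qed.

Lemma feasible_single i K : K \in B i -> feasible B setT (single i K).
Proof.
move=> KB; apply/and3P; split.
- by apply/forallP => j; rewrite /single; case: eqP => [->|]; rewrite ?KB ?eqxx ?orbT.
- apply/forallP => j; apply/forallP => k; apply/implyP => jk; rewrite /single.
  case: eqP => [ji|_]; last by rewrite -setI_eq0 set0I.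
  case: eqP => [ki|_]; last by rewrite -setI_eq0 setI0.
  by move: jk; rewrite ji ki eqxx.
- by apply/forallP => j; rewrite inE.
Qed.

Lemma W_single L b i K : (forall j, b j set0 = 0) ->
  W L b (single i K) = if i \in L then b i K else 0.
Proof.
move=> b0; rewrite /W (eq_bigr (fun j => if j == i then b i K else 0)); last first.
  by move=> j _; rewrite /single; case: eqP => [->|].
rewrite -big_mkcondr /=; case: ifP => iL.
  by apply: (big_pred1 i) => j /=; case: eqP => [->|]; rewrite ?iL ?andbF.
by apply: big_pred0 => j /=; case: eqP => [->|]; rewrite ?iL ?andbF.
Qed.

Lemma W_feasible L b y : (forall j, b j set0 = 0) -> feasible B L y ->
  W L b y = \sum_j b j (y j).
Proof.
move=> b0 /and3P[_ _ /forallP out]; rewrite /W big_mkcond /=.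
apply: eq_bigr => j _; case: ifP => // /negbT jL.
by move/implyP/(_ jL)/eqP: (out j) => ->.
Qed.

Lemma W_le_Wopt L b y : feasible B L y -> W L b y <= Wopt B L b.
Proof.
have fy : fun_of_fin (finfun y) = y := functional_extensionality _ _ (ffunE y).
by move=> Ly; rewrite -fy; apply: le_bigmax_cond; rewrite fy.
Qed.

Lemma Wopt_ge L b y : feasible B setT y -> W L b y <= Wopt B L b.
Proof. by move=> Ty; rewrite -W_restrict; apply/W_le_Wopt/feasible_restrict. Qed.

Lemma Wopt_le L b c : 0 <= c ->
  (forall y, feasible B L y -> W L b y <= c) -> Wopt B L b <= c.
Proof. by move=> c0 Wc; apply: bigmax_le => // y; apply: Wc. Qed.

End Allocations.

Section NearestUnique.
Variables (R : realType) (m n : nat) (B : 'I_n -> {set {set 'I_m}}).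
Variables (b : 'I_n -> {set 'I_m} -> R) (x : 'I_n -> {set 'I_m}).
Implicit Types p q : 'I_n -> R.

Definition midpoint p p' : 'I_n -> R := fun i => (p i + p' i) / 2.

Lemma sum_midpoint (P : pred 'I_n) p p' :
  \sum_(i | P i) midpoint p p' i = (\sum_(i | P i) p i + \sum_(i | P i) p' i) / 2.
Proof. by rewrite -big_split mulr_suml. Qed.

Lemma in_core_midpoint p p' :
  in_core B b x p -> in_core B b x p' -> in_core B b x (midpoint p p').
Proof. by move=> cp cp' L; rewrite sum_midpoint; have := cp L; have := cp' L; lra. Qed.

Lemma in_mrc_midpoint p p' :
  in_mrc B b x p -> in_mrc B b x p' -> in_mrc B b x (midpoint p p').
Proof.
move=> [cp minp] [cp' minp']; split=> [|p'' cp'']; first exact: in_core_midpoint.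
by rewrite sum_midpoint; have := minp _ cp''; have := minp' _ cp''; lra.
Qed.

Lemma sqdist_midpoint p p' q :
  sqdist (midpoint p p') q = (sqdist p q + sqdist p' q) / 2 - sqdist p p' / 4.
Proof.
rewrite /sqdist -big_split !mulr_suml -sumrB.
by apply: eq_bigr => i _; rewrite /midpoint /=; field.
Qed.

Lemma sqdist_ge0 p q : 0 <= sqdist p q.
Proof. by apply: sumr_ge0 => i _; apply: sqr_ge0. Qed.

Lemma sqdist_eq0 p q : sqdist p q = 0 -> p =1 q.
Proof.
move=> /psumr_eq0P pq i; apply/eqP; rewrite -subr_eq0 -sqrf_eq0.
by apply/eqP/pq => // j _; apply: sqr_ge0.
Qed.

Theorem vcg_nearest_unique p p' :
  vcg_nearest B b x p -> vcg_nearest B b x p' -> p =1 p'.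
Proof.
move=> [mp nearp] [mp' nearp']; apply: sqdist_eq0.
have := nearp _ (in_mrc_midpoint mp mp'); rewrite sqdist_midpoint.
by have := nearp _ mp'; have := nearp' _ mp; have := sqdist_ge0 p p'; lra.
Qed.

End NearestUnique.

Definition gA : 'I_2 := ord0.
Definition gB : 'I_2 := ord_max.
Definition KA : {set 'I_2} := [set gA].
Definition KB : {set 'I_2} := [set gB].
Definition KAB : {set 'I_2} := setT.

Lemma good_cases (g : 'I_2) : g = gA \/ g = gB.
Proof. by case: g => [[|[|//]]] ?; [left|right]; apply: val_inj. Qed.

Lemma eq_bundleE (X Y : {set 'I_2}) :
  (X == Y) = ((gA \in X) == (gA \in Y)) && ((gB \in X) == (gB \in Y)).
Proof.
apply/eqP/andP => [-> //|[/eqP eA /eqP eB]].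
by apply/setP => g; case: (good_cases g) => ->.
Qed.

Lemma disjoint_bundleE (X Y : {set 'I_2}) :
  [disjoint X & Y] = ~~ ((gA \in X) && (gA \in Y)) && ~~ ((gB \in X) && (gB \in Y)).
Proof.
rewrite -setI_eq0 eq_bundleE !inE.
by case: (gA \in X); case: (gA \in Y); case: (gB \in X); case: (gB \in Y).
Qed.

Definition i1 : 'I_3 := @Ordinal 3 0 isT.
Definition i2 : 'I_3 := @Ordinal 3 1 isT.
Definition i3 : 'I_3 := @Ordinal 3 2 isT.

Lemma bidder_cases (j : 'I_3) : [\/ j = i1, j = i2 | j = i3].
Proof.
by case: j => [[|[|[|//]]]] ?; [constructor 1|constructor 2|constructor 3]; apply: val_inj.
Qed.

Lemma sum_bidders (R : realType) (F : 'I_3 -> R) : \sum_j F j = F i1 + F i2 + F i3.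
Proof.
rewrite !big_ord_recl big_ord0 addr0 addrA.
by congr (F _ + F _ + F _); apply: val_inj.
Qed.

Lemma sum_bidders_in (R : realType) (P : {pred 'I_3}) (F : 'I_3 -> R) :
  \sum_(j in P) F j = (if i1 \in P then F i1 else 0) + (if i2 \in P then F i2 else 0)
                      + (if i3 \in P then F i3 else 0).
Proof. by rewrite big_mkcond sum_bidders. Qed.

Definition interest (j : 'I_3) : {set {set 'I_2}} :=
  match val j with 0 => [set KA; KAB] | 1 => [set KB] | _ => [set KAB] end.

Definition alloc (j : 'I_3) : {set 'I_2} :=
  match val j with 0 => KA | 1 => KB | _ => set0 end.

Lemma feasible_alloc : feasible interest setT alloc.
Proof.
apply/and3P; split.
- apply/forallP => j; case: (bidder_cases j) => ->;
  by rewrite /alloc /interest /= !inE eqxx ?orbT.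
- apply/forallP => j; apply/forallP => k.
  by case: (bidder_cases j) => ->; case: (bidder_cases k) => ->;
    rewrite /alloc //= disjoint_bundleE !inE.
- by apply/forallP => j; rewrite inE.
Qed.

Lemma feasible_single_i3 : feasible interest setT (single i3 KAB).
Proof. by apply: feasible_single; rewrite inE. Qed.

Lemma feasible_single_i1 : feasible interest setT (single i1 KAB).
Proof. by apply: feasible_single; rewrite !inE eqxx orbT. Qed.

Lemma allocation_cases L y : feasible interest L y ->
  [/\ [\/ y i1 = set0, y i1 = KA /\ i1 \in L | y i1 = KAB /\ i1 \in L],
      y i2 = set0 \/ y i2 = KB /\ i2 \in L &
      y i3 = set0 \/ y i3 = KAB /\ i3 \in L].
Proof.
move=> Ly; split.
- case: (feasible_bundle i1 Ly) => [|[]]; first by constructor 1.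
  by rewrite !inE => /orP[]/eqP y1 l1; [constructor 2|constructor 3].
- by case: (feasible_bundle i2 Ly) => [|[]]; [left|rewrite inE => /eqP; right].
- by case: (feasible_bundle i3 Ly) => [|[]]; [left|rewrite inE => /eqP; right].
Qed.

Section Example.
Variables (R : realType) (h : R).

Definition bid (j : 'I_3) (K : {set 'I_2}) : R :=
  match val j with
  | 0 => if K == KA then 8 else if K == KAB then h else 0
  | 1 => if K == KB then 8 else 0
  | _ => if K == KAB then 12 else 0
  end.

Lemma bid_set0 j : bid j set0 = 0.
Proof. by case: (bidder_cases j) => ->; rewrite /bid /= !eq_bundleE !inE. Qed.

Lemma bids_ok_bid : 0 <= h -> bids_ok interest bid.
Proof.
move=> h0 j K; case: (bidder_cases j) => ->; rewrite /bid /interest /= !inE.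
all: split; [by repeat case: ifP => _; lra | by repeat case: (_ == _)].
Qed.

Lemma W_alloc L :
  W L bid alloc = (if i1 \in L then 8 else 0) + (if i2 \in L then 8 else 0).
Proof. by rewrite /W sum_bidders_in /bid /alloc /= !eq_bundleE !inE /= if_same addr0. Qed.

Lemma W_single_i3 L : W L bid (single i3 KAB) = if i3 \in L then 12 else 0.
Proof. by rewrite (W_single _ _ _ bid_set0) /bid /= eqxx. Qed.

Lemma W_single_i1 L : W L bid (single i1 KAB) = if i1 \in L then h else 0.
Proof. by rewrite (W_single _ _ _ bid_set0) /bid /= !eq_bundleE !inE. Qed.

Lemma W_le_candidates L y c : feasible interest L y ->
  W L bid alloc <= c -> W L bid (single i3 KAB) <= c -> W L bid (single i1 KAB) <= c ->
  W L bid y <= c.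
Proof.
move=> Ly; rewrite W_alloc W_single_i3 W_single_i1 (W_feasible bid_set0 Ly) sum_bidders.
have := feasible_disjoint Ly (isT : i1 != i2).
have := feasible_disjoint Ly (isT : i1 != i3).
have := feasible_disjoint Ly (isT : i2 != i3).
have [[->|[-> ->]|[-> ->]] [->|[-> ->]] [->|[-> ->]]] := allocation_cases Ly;
  rewrite !disjoint_bundleE /bid /= !eq_bundleE !inE //=.
all: by case: (i1 \in L); case: (i2 \in L); case: (i3 \in L) => /=; lra.
Qed.

Lemma Wopt_le_candidates L c :
  W L bid alloc <= c -> W L bid (single i3 KAB) <= c -> W L bid (single i1 KAB) <= c ->
  Wopt interest L bid <= c.
Proof.
move=> c_alloc c_i3 c_i1; apply: Wopt_le => [|y Ly]; last exact: W_le_candidates.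
by move: c_alloc; rewrite W_alloc; case: (i1 \in L); case: (i2 \in L); lra.
Qed.

Lemma vcg_i1 : vcg interest bid alloc i1 = 4.
Proof.
have lb := Wopt_ge (setT :\ i1) bid feasible_single_i3.
have ub : Wopt interest (setT :\ i1) bid <= 12.
  by apply: Wopt_le_candidates; rewrite ?W_alloc ?W_single_i3 ?W_single_i1 ?inE //=; lra.
by move: lb ub; rewrite /vcg W_alloc W_single_i3 !inE /=; lra.
Qed.

Lemma vcg_i2_low : h <= 12 -> vcg interest bid alloc i2 = 4.
Proof.
move=> h_le12; have lb := Wopt_ge (setT :\ i2) bid feasible_single_i3.
have ub : Wopt interest (setT :\ i2) bid <= 12.
  by apply: Wopt_le_candidates; rewrite ?W_alloc ?W_single_i3 ?W_single_i1 ?inE //=; lra.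
by move: lb ub; rewrite /vcg W_alloc W_single_i3 !inE /=; lra.
Qed.

Lemma vcg_i2_high : 12 <= h -> vcg interest bid alloc i2 = h - 8.
Proof.
move=> h_ge12; have lb := Wopt_ge (setT :\ i2) bid feasible_single_i1.
have ub : Wopt interest (setT :\ i2) bid <= h.
  by apply: Wopt_le_candidates; rewrite ?W_alloc ?W_single_i3 ?W_single_i1 ?inE //=; lra.
by move: lb ub; rewrite /vcg W_alloc W_single_i1 !inE /=; lra.
Qed.

(* [lra] does not see section hypotheses, hence the [have h16 := h_le16] below. *)
Hypothesis h_le16 : h <= 16.

Lemma vcg_i3 : vcg interest bid alloc i3 = 0.
Proof.
have lb := Wopt_ge (setT :\ i3) bid feasible_alloc.
have ub : Wopt interest (setT :\ i3) bid <= 16.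
  by apply: Wopt_le_candidates; rewrite ?W_alloc ?W_single_i3 ?W_single_i1 ?inE //=; lra.
by move: lb ub; rewrite /vcg W_alloc !inE /=; lra.
Qed.

Lemma vcg_i2_bounds :
  [/\ 4 <= vcg interest bid alloc i2, h - 8 <= vcg interest bid alloc i2
    & vcg interest bid alloc i2 <= 8].
Proof.
have h16 := h_le16; have [h_le12|/ltW h_ge12] := leP h 12.
  by rewrite vcg_i2_low //; split; lra.
by rewrite vcg_i2_high //; split; lra.
Qed.

Lemma efficient_alloc : efficient interest bid alloc.
Proof.
split=> [|y Ty]; first exact: feasible_alloc.
have h16 := h_le16; apply: W_le_candidates => //;
by rewrite ?W_alloc ?W_single_i3 ?W_single_i1 ?inE //=; lra.
Qed.

(* The projection of the VCG point (4, q, 0) onto the line p1 + p2 = 12,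
   p3 = 0, which contains the minimum-revenue core. *)
Definition nearest (j : 'I_3) : R :=
  let q := vcg interest bid alloc i2 in
  match val j with 0 => 8 - q / 2 | 1 => 4 + q / 2 | _ => 0 end.

Lemma in_core_nearest : in_core interest bid alloc nearest.
Proof.
move=> L; have [q_ge4 q_ge q_le8] := vcg_i2_bounds.
rewrite sum_bidders_in !inE /nearest /= lerBlDl.
apply: Wopt_le_candidates; rewrite ?W_alloc ?W_single_i3 ?W_single_i1;
by case: (i1 \in L); case: (i2 \in L); case: (i3 \in L) => /=; lra.
Qed.

Lemma in_core_lb p : in_core interest bid alloc p -> 12 <= p i1 + p i2 /\ 0 <= p i3.
Proof.
move=> cp; split.
- have := cp [set i3]; have := Wopt_ge [set i3] bid feasible_single_i3.
  by rewrite sum_bidders_in W_alloc W_single_i3 !inE /=; lra.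
- have := cp [set i1; i2]; have := Wopt_ge [set i1; i2] bid feasible_alloc.
  by rewrite sum_bidders_in W_alloc !inE /=; lra.
Qed.

Lemma in_mrc_nearest : in_mrc interest bid alloc nearest.
Proof.
split=> [|p /in_core_lb]; first exact: in_core_nearest.
by rewrite !sum_bidders /nearest /=; lra.
Qed.

Lemma in_mrc_shape p : in_mrc interest bid alloc p -> p i3 = 0 /\ p i1 + p i2 = 12.
Proof.
case=> /in_core_lb lb /(_ _ in_core_nearest).
by rewrite !sum_bidders /nearest /=; split; lra.
Qed.

Lemma sqdist_nearest p : in_mrc interest bid alloc p ->
  sqdist p (vcg interest bid alloc) =
  sqdist nearest (vcg interest bid alloc) + 2 * (p i1 - nearest i1) ^+ 2.
Proof.
move=> /in_mrc_shape[p3 p12]; have p2 : p i2 = 12 - p i1 by lra.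
by rewrite /sqdist !sum_bidders vcg_i1 vcg_i3 /nearest /= p2 p3; field.
Qed.

Lemma vcg_nearest_nearest : vcg_nearest interest bid alloc nearest.
Proof.
split=> [|p /sqdist_nearest ->]; first exact: in_mrc_nearest.
by rewrite lerDl mulr_ge0 ?sqr_ge0.
Qed.

Lemma nearest_i1_low : h <= 12 -> nearest i1 = 6.
Proof. by move=> h_le12; rewrite /nearest /= vcg_i2_low //; lra. Qed.

Lemma nearest_i1_high : 12 <= h -> nearest i1 = 12 - h / 2.
Proof. by move=> h_ge12; rewrite /nearest /= vcg_i2_high //; lra. Qed.

End Example.

Theorem proposition1 (R : realType) :
  exists (m n : nat) (B : 'I_n -> {set {set 'I_m}}) (x : 'I_n -> {set 'I_m})
         (i : 'I_n) (b b' : 'I_n -> {set 'I_m} -> R),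
    bids_ok B b /\ bids_ok B b' /\
    efficient B b x /\ efficient B b' x /\
    (forall j, j != i -> b j = b' j) /\
    (forall K, b i K <= b' i K) /\
    (exists p, vcg_nearest B b x p) /\ (exists p', vcg_nearest B b' x p') /\
    (forall p p', vcg_nearest B b x p -> vcg_nearest B b' x p' -> p' i < p i).
Proof.
have le0 : (0 : R) <= 16 by lra.
have le14 : (14 : R) <= 16 by lra.
exists 2%N, 3%N, interest, alloc, i1, (bid (0 : R)), (bid (14 : R)).
split; first exact: bids_ok_bid.
split; first by apply: bids_ok_bid; lra.
split; first exact: efficient_alloc le0.
split; first exact: efficient_alloc le14.
split; first by move=> j; case: (bidder_cases j) => ->; rewrite ?eqxx.
split; first by move=> K; rewrite /bid /=; do 2?case: ifP => _; lra.
split; first by exists (nearest 0); exact: vcg_nearest_nearest.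
split; first by exists (nearest 14); exact: vcg_nearest_nearest.
move=> p p' /vcg_nearest_unique/(_ (vcg_nearest_nearest le0)) ->.
move=> /vcg_nearest_unique/(_ (vcg_nearest_nearest le14)) ->.
rewrite (@nearest_i1_high _ 14) ?(@nearest_i1_low _ 0); lra.
Qed.
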